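(* Let $U:\mathbb{R}^d\to\mathbb{R}$ be twice continuously differentiable. For all $q_0,p_0\in\mathbb{R}^d$ and $h>0$, writing $(q_1,p_1)=\Phi_h(q_0,p_0)$ and $q_t=q_0+t(q_1-q_0)$ for $t\in[0,1]$, $$\begin{aligned}H(\Phi_h(q_0,p_0))-H(q_0,p_0)&=h^2\int_0^1\langle p_0,\nabla^2U(q_t)p_0\rangle(1/2-t)\,dt+h^3\int_0^1\langle p_0,\nabla^2U(q_t)\nabla U(q_0)\rangle(t-1/4)\,dt\\&\quad-\frac{h^4}{4}\int_0^1\langle\nabla U(q_0),\nabla^2U(q_t)\nabla U(q_0)\rangle\,t\,dt+\frac{h^4}{8}\Big\|\int_0^1\nabla^2U(q_t)p_0\,dt\Big\|^2\\&\quad-\frac{h^5}{8}\Big\langle\int_0^1\nabla^2U(q_t)\nabla U(q_0)\,dt,\int_0^1\nabla^2U(q_t)p_0\,dt\Big\rangle+\frac{h^6}{32}\Big\|\int_0^1\nabla^2U(q_t)\nabla U(q_0)\,dt\Big\|^2.\end{aligned}$$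
   Context: $H(q,p)=U(q)+\|p\|^2/2$. The leapfrog map is $\Phi_h=\Psi^{(1)}_h\circ\Psi^{(2)}_h\circ\Psi^{(1)}_h$ with $\Psi^{(1)}_h(q,p)=(q,p-(h/2)\nabla U(q))$ and $\Psi^{(2)}_h(q,p)=(q+hp,p)$, i.e. $q_1=q_0+hp_0-(h^2/2)\nabla U(q_0)$ and $p_1=p_0-(h/2)(\nabla U(q_0)+\nabla U(q_1))$. *)

From HB Require Import structures.
From mathcomp Require Import all_boot all_order all_algebra.
From mathcomp Require Import all_classical all_reals all_analysis.
Set Implicit Arguments. Unset Strict Implicit. Unset Printing Implicit Defensive.
Import Order.TTheory GRing.Theory Num.Theory numFieldNormedType.Exports.
Local Open Scope classical_set_scope.
Local Open Scope ring_scope.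

Section Defs.
Variables (R : realType) (d : nat).
Notation vec := 'rV[R]_d.

Definition dotv (u v : vec) : R := \sum_(i < d) u ord0 i * v ord0 i.
Definition sqnorm (v : vec) : R := dotv v v.

Definition ebase (i : 'I_d) : vec := delta_mx ord0 i.

Definition partial (i : 'I_d) (f : vec -> R) (x : vec) : R := 'D_(ebase i) f x.

Definition grad (U : vec -> R) (x : vec) : vec := \row_i partial i U x.
Definition hess (U : vec -> R) (x : vec) : 'M[R]_d :=
  \matrix_(i, j) partial j (partial i U) x.
Definition hess_app (U : vec -> R) (x v : vec) : vec :=
  \row_i \sum_(j < d) hess U x i j * v ord0 j.

Definition C2 (U : vec -> R) : Prop :=
  (forall x, differentiable U x) /\
  (forall i x, differentiable (partial i U) x) /\
  (forall i j, continuous (partial j (partial i U))).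

Definition Ham (U : vec -> R) (qp : vec * vec) : R :=
  U qp.1 + sqnorm qp.2 / 2.

Definition Psi1 (U : vec -> R) (h : R) (qp : vec * vec) : vec * vec :=
  (qp.1, qp.2 - (h / 2) *: grad U qp.1).
Definition Psi2 (h : R) (qp : vec * vec) : vec * vec :=
  (qp.1 + h *: qp.2, qp.2).
Definition leapfrog (U : vec -> R) (h : R) (qp : vec * vec) : vec * vec :=
  Psi1 U h (Psi2 h (Psi1 U h qp)).

Definition int01 (f : R -> R) : R :=
  \int[@lebesgue_measure R]_(t in `[0%R, 1%R]) f t.
Definition int01v (f : R -> vec) : vec := \row_i int01 (fun t => f t ord0 i).

End Defs.

From HB Require Import structures.
From mathcomp Require Import all_boot all_order all_algebra.
From mathcomp Require Import all_classical all_reals all_analysis.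
From mathcomp Require Import ring lra.
Import Order.TTheory GRing.Theory Num.Theory numFieldNormedType.Exports.
Local Open Scope classical_set_scope.
Local Open Scope ring_scope.
Set Implicit Arguments. Unset Strict Implicit.

(* Put D = q1 - q0 = h p0 - (h^2/2) grad U(q0), H(t) = hess U (q0 + t D),
   A0 = int_0^1 H(t) dt and A1 = int_0^1 t H(t) dt.  Taylor's formula with
   integral remainder gives U(q1) = U(q0) + <D, grad U(q0)> + <D, D (A0 - A1)>,
   and the fundamental theorem of calculus gives grad U(q1) = grad U(q0) + D A0,
   which determines the new momentum.  Since the weights 1/2 - t, t - 1/4 and t
   are affine, every integral in the statement is a bilinear form in A0 and A1.
   These matrices are symmetric by Schwarz's theorem (obtained from the
   symmetric second difference of U), so what remains is a polynomial identity
   in h and the scalar products of p0, grad U(q0), A0 and A1. *)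

Section RealFunctions.
Variable R : realType.
Implicit Types (f g : R -> R) (a b c s t df dg : R).

Lemma MVT_from0 g (dg : R -> R) s : 0 < s ->
  (forall t, is_derive t 1 g (dg t)) ->
  exists2 c, 0 < c < s & g s - g 0 = dg c * s.
Proof.
move=> s0 dG.
have cg : {within `[0, s], continuous g}.
  apply: continuous_subspaceT => x; apply/differentiable_continuous/derivable1_diffP.
  exact: (@ex_derive _ _ _ _ _ _ _ (dG x)).
have [c + E] := MVT s0 (fun x _ => dG x) cg.
by rewrite in_itv /= => c0s; exists c; rewrite // E subr0.
Qed.

Lemma is_derive_add f g t df dg : is_derive t 1 f df -> is_derive t 1 g dg ->
  is_derive t 1 (fun s => f s + g s) (df + dg).
Proof. by move=> fd gd; exact: is_deriveD. Qed.

Lemma is_derive_mul f g t df dg : is_derive t 1 f df -> is_derive t 1 g dg ->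
  is_derive t 1 (fun s => f s * g s) (f t * dg + g t * df).
Proof. by move=> fd gd; exact: is_deriveM. Qed.

Lemma is_derive_cstM c f t df : is_derive t 1 f df ->
  is_derive t 1 (fun s => c * f s) (c * df).
Proof. by move=> fd; exact: is_deriveZ. Qed.

Lemma is_derive_affine a b t : is_derive t 1 (fun s => a + b * s) b.
Proof.
have := is_derive_add (is_derive_cst a t 1) (is_deriveZ b (is_derive_id t 1)).
by rewrite add0r (_ : b *: 1 = b) //; exact: mulr1.
Qed.

Lemma continuous_mul f g : continuous f -> continuous g ->
  continuous (fun t => f t * g t).
Proof. by move=> cf cg x; apply: continuousM; [exact: cf | exact: cg]. Qed.

Lemma continuous_cstM c f : continuous f -> continuous (fun t => c * f t).
Proof. by apply: continuous_mul; exact: cst_continuous. Qed.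

Lemma continuous_affine a b : continuous (fun t : R => a + b * t).
Proof.
move=> x; apply: continuousD; first exact: cst_continuous.
by apply: continuous_cstM => y; exact: cvg_id.
Qed.

Lemma continuous_sum n (F : 'I_n -> R -> R) :
  (forall i, continuous (F i)) -> continuous (fun t => \sum_(i < n) F i t).
Proof.
move=> cF; rewrite -fct_sumE.
apply: (@big_ind _ (fun f : R -> R => continuous f)) => //.
  by move=> x; exact: cvg_cst.
by move=> f g cf cg x; exact: (continuousD (cf x) (cg x)).
Qed.

End RealFunctions.

Section SchwarzTheorem.
Variables (R : realType) (V : normedModType R).
Implicit Types (f : V -> R) (u w x y : V) (s : R).

Lemma is_derive_line (W : normedModType R) (f : V -> W) x u (t : R) :
  derivable f (x + t *: u) u ->
  is_derive t 1 (fun s => f (x + s *: u)) ('D_u f (x + t *: u)).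
Proof.
move=> df.
have E : (fun h : R => h^-1 *: (((fun s => f (x + s *: u)) \o shift t) (h *: 1)
                                 - f (x + t *: u)))
       = (fun h : R => h^-1 *: ((f \o shift (x + t *: u)) (h *: u) - f (x + t *: u))).
  apply/funext => h /=; congr (_ *: (f _ - _)).
  by rewrite -[h *: 1]/(h * 1) mulr1 scalerDl addrCA addrC.
split; first by move: df; rewrite /derivable -E.
by rewrite /derive E.
Qed.

Definition second_diff f u w y s : R :=
  f (y + s *: u + s *: w) - f (y + s *: u) - f (y + s *: w) + f y.

Lemma second_diffC f u w y s : second_diff f u w y s = second_diff f w u y s.
Proof. by rewrite /second_diff [y + s *: u + _]addrAC; ring. Qed.

Lemma second_diff_MVT f u w y s :
  (forall x, derivable f x u) -> (forall x, derivable ('D_u f) x w) -> 0 < s ->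
  exists xi, exists2 eta, 0 < xi < s /\ 0 < eta < s &
    second_diff f u w y s = s ^+ 2 * 'D_w ('D_u f) (y + xi *: u + eta *: w).
Proof.
move=> fu fuw s0.
pose g t := f (y + s *: w + t *: u) - f (y + t *: u).
pose dg t := 'D_u f (y + s *: w + t *: u) - 'D_u f (y + t *: u).
have [xi xi_s gE] := @MVT_from0 R g dg s s0
  (fun t => is_deriveB (is_derive_line (fu _)) (is_derive_line (fu _))).
pose k t := 'D_u f (y + xi *: u + t *: w).
have [eta eta_s kE] := @MVT_from0 R k (fun t => 'D_w ('D_u f) (y + xi *: u + t *: w))
  s s0 (fun t => is_derive_line (fuw _)).
exists xi, eta => //.
have -> : second_diff f u w y s = g s - g 0.
  by rewrite /second_diff /g !scale0r !addr0 [y + s *: u + _]addrAC; ring.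
rewrite gE.
have -> : dg xi = k s - k 0 by rewrite /dg /k scale0r addr0 [y + s *: w + _]addrAC.
by rewrite kE expr2; ring.
Qed.

Lemma norm_combination_lt u w (a b s : R) :
  0 < a < s -> 0 < b < s -> `|a *: u + b *: w| < s * (`|u| + `|w| + 1).
Proof.
move=> /andP[a0 a_s] /andP[b0 b_s].
apply: (le_lt_trans (ler_normD _ _)); rewrite !normrZ !gtr0_norm //.
have := normr_ge0 u; have := normr_ge0 w => w0 u0.
have : a * `|u| <= s * `|u| by rewrite ler_wpM2r // ltW.
have : b * `|w| <= s * `|w| by rewrite ler_wpM2r // ltW.
nra.
Qed.

Lemma cvg_second_diff f u w y :
  (forall x, derivable f x u) -> (forall x, derivable ('D_u f) x w) ->
  {for y, continuous ('D_w ('D_u f))} ->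
  (fun s => second_diff f u w y s / s ^+ 2) @ 0^'+ --> 'D_w ('D_u f) y.
Proof.
move=> fu fuw cf; apply/cvgrPdist_lt => e e0.
have /(_ (nbhs_filter y)) /nbhs_normP [r r0 near_y] := cvgr_dist_lt _ _ cf _ e0.
have C0 : 0 < `|u| + `|w| + 1 by rewrite ltr_wpDl ?addr_ge0.
near=> s.
have s0 : 0 < s by near: s; exact: nbhs_right_gt.
have [xi [eta [xi_s eta_s] ->]] := second_diff_MVT y fu fuw s0.
rewrite mulrC mulKf ?expf_neq0 ?gt_eqF //; apply: near_y => /=.
rewrite -addrA opprD addNKr normrN.
apply: (lt_le_trans (norm_combination_lt u w xi_s eta_s)).
rewrite -ler_pdivlMr //; apply/ltW.
by near: s; apply: nbhs_right_lt; rewrite divr_gt0.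
Unshelve. all: by end_near.
Qed.

Lemma derive_comm f u w y :
  (forall x, derivable f x u) -> (forall x, derivable f x w) ->
  (forall x, derivable ('D_u f) x w) -> (forall x, derivable ('D_w f) x u) ->
  {for y, continuous ('D_w ('D_u f))} -> {for y, continuous ('D_u ('D_w f))} ->
  'D_w ('D_u f) y = 'D_u ('D_w f) y.
Proof.
move=> fu fw fuw fwu cuw cwu.
have Duw := @cvg_second_diff f u w y fu fuw cuw.
have Dwu := @cvg_second_diff f w u y fw fwu cwu.
have E : (fun s => second_diff f u w y s / s ^+ 2) =
         (fun s => second_diff f w u y s / s ^+ 2).
  by apply/funext => s; rewrite second_diffC.
rewrite E in Duw.
exact: (cvg_unique _ Duw Dwu).
Qed.

End SchwarzTheorem.

Section IntegralOnUnitInterval.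
Variable R : realType.
Implicit Types (f g : R -> R).

Lemma eq_int01 f g : f =1 g -> int01 f = int01 g.
Proof. by move=> /funext ->. Qed.

Lemma int01_FTC (F f : R -> R) : continuous f ->
  (forall t : R, is_derive t 1 F (f t)) -> int01 f = F 1 - F 0.
Proof.
move=> cf dF.
have cF : continuous F.
  move=> x; apply/differentiable_continuous/derivable1_diffP.
  exact: (@ex_derive _ _ _ _ _ _ _ (dF x)).
rewrite /int01 /Rintegral (@continuous_FTC2 _ f F) //.
- exact: continuous_subspaceT.
- split.
  + by move=> x _; exact: (@ex_derive _ _ _ _ _ _ _ (dF x)).
  + exact/cvg_at_right_filter/cF.
  + exact/cvg_at_left_filter/cF.
- by move=> x _; rewrite derive1E; exact: (@derive_val _ _ _ _ _ _ _ (dF x)).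
Qed.

Lemma int01_integrable f : continuous f ->
  (@lebesgue_measure R).-integrable `[0%R, 1%R] (EFin \o f).
Proof.
move=> cf; apply: continuous_compact_integrable; first exact: segment_compact.
exact: continuous_subspaceT.
Qed.

Lemma int01D f g : continuous f -> continuous g ->
  int01 (fun t => f t + g t) = int01 f + int01 g.
Proof. by move=> cf cg; rewrite /int01 RintegralD //; exact: int01_integrable. Qed.

Lemma int01Z (c : R) f : continuous f -> int01 (fun t => c * f t) = c * int01 f.
Proof. by move=> cf; rewrite /int01 RintegralZl //; exact: int01_integrable. Qed.

Lemma int01_sum n (F : 'I_n -> R -> R) : (forall i, continuous (F i)) ->
  int01 (fun t => \sum_(i < n) F i t) = \sum_(i < n) int01 (F i).
Proof.
move=> cF; rewrite -fct_sumE.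
suff [] : continuous (\sum_(i < n) F i) /\
          int01 (\sum_(i < n) F i) = \sum_(i < n) int01 (F i) by [].
elim/big_rec2: _ => [|i r f _ [cf <-]].
  split; first by move=> x; exact: cvg_cst.
  rewrite (_ : 0 = fun t => 0 * 0); last by apply/funext => t; rewrite mul0r.
  by rewrite int01Z ?mul0r //; exact: cst_continuous.
split; first by move=> x; exact: (continuousD (cF i x) (cf x)).
exact: int01D.
Qed.

Definition int01mx m n (M : R -> 'M[R]_(m, n)) : 'M[R]_(m, n) :=
  \matrix_(i, j) int01 (fun t => M t i j).

Lemma continuous_mulmx_entry m n (v : 'rV[R]_m) (M : R -> 'M[R]_(m, n)) j :
  (forall i j, continuous (fun t => M t i j)) ->
  continuous (fun t => (v *m M t) ord0 j).
Proof.
move=> cM; under eq_fun do rewrite mxE.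
by apply: continuous_sum => i; apply: continuous_cstM.
Qed.

Lemma continuous_scalemx_entry m n (w : R -> R) (M : R -> 'M[R]_(m, n)) :
  continuous w -> (forall i j, continuous (fun t => M t i j)) ->
  forall i j, continuous (fun t => (w t *: M t) i j).
Proof. by move=> cw cM i j; under eq_fun do rewrite mxE; exact: continuous_mul. Qed.

Lemma continuous_dotv_mulmx d (u v : 'rV[R]_d) (M : R -> 'M[R]_d) :
  (forall i j, continuous (fun t => M t i j)) ->
  continuous (fun t => dotv u (v *m M t)).
Proof.
by move=> cM; apply: continuous_sum => i; apply/continuous_cstM/continuous_mulmx_entry.
Qed.

Lemma int01v_mulmx m d (v : 'rV[R]_m) (M : R -> 'M[R]_(m, d)) :
  (forall i j, continuous (fun t => M t i j)) ->
  int01v (fun t => v *m M t) = v *m int01mx M.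
Proof.
move=> cM; apply/rowP => j; rewrite !mxE.
under eq_int01 do rewrite mxE.
rewrite int01_sum; last by move=> i; apply: continuous_cstM.
by apply: eq_bigr => i _; rewrite int01Z // mxE.
Qed.

Lemma dotv_int01v d (u : 'rV[R]_d) (F : R -> 'rV[R]_d) :
  (forall i, continuous (fun t => F t ord0 i)) ->
  dotv u (int01v F) = int01 (fun t => dotv u (F t)).
Proof.
move=> cF; rewrite /dotv int01_sum; last by move=> i; apply: continuous_cstM.
by apply: eq_bigr => i _; rewrite mxE int01Z.
Qed.

Lemma int01mx_affine m n (a b : R) (M : R -> 'M[R]_(m, n)) :
  (forall i j, continuous (fun t => M t i j)) ->
  int01mx (fun t => (a + b * t) *: M t) =
  a *: int01mx M + b *: int01mx (fun t => t *: M t).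
Proof.
move=> cM; apply/matrixP => i j; rewrite !mxE.
have ctM : continuous (fun t : R => t * M t i j).
  by move=> x; apply: continuousM; [exact: cvg_id | exact: cM].
rewrite (eq_int01 (g := fun t => a * M t i j + b * (t * M t i j))); last first.
  by move=> t; rewrite !mxE mulrDl mulrA.
rewrite int01D ?int01Z //; try exact: continuous_cstM.
by congr (_ + _ * _); apply: eq_int01 => t; rewrite mxE.
Qed.

Lemma trmx_int01mx n (M : R -> 'M[R]_n) : (int01mx M)^T = int01mx (fun t => (M t)^T).
Proof. by apply/matrixP => i j; rewrite !mxE; apply: eq_int01 => t; rewrite mxE. Qed.

End IntegralOnUnitInterval.

Section DotProduct.
Variables (R : realType) (d : nat).
Implicit Types (u v w : 'rV[R]_d) (A : 'M[R]_d).

Lemma dotvC u v : dotv u v = dotv v u.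
Proof. by apply: eq_bigr => i _; rewrite mulrC. Qed.

Lemma dotvDl u v w : dotv (u + v) w = dotv u w + dotv v w.
Proof. by rewrite /dotv -big_split; apply: eq_bigr => i _; rewrite mxE mulrDl. Qed.

Lemma dotvNl u w : dotv (- u) w = - dotv u w.
Proof. by rewrite /dotv -sumrN; apply: eq_bigr => i _; rewrite mxE mulNr. Qed.

Lemma dotvZl (c : R) u w : dotv (c *: u) w = c * dotv u w.
Proof. by rewrite /dotv mulr_sumr; apply: eq_bigr => i _; rewrite mxE mulrA. Qed.

Lemma dotvDr u v w : dotv w (u + v) = dotv w u + dotv w v.
Proof. by rewrite !(dotvC w) dotvDl. Qed.

Lemma dotvNr u w : dotv w (- u) = - dotv w u.
Proof. by rewrite !(dotvC w) dotvNl. Qed.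

Lemma dotvZr (c : R) u w : dotv w (c *: u) = c * dotv w u.
Proof. by rewrite !(dotvC w) dotvZl. Qed.

Lemma dotv_mulmx_sym A u v : A^T = A -> dotv u (v *m A) = dotv v (u *m A).
Proof.
move=> symA; rewrite /dotv.
under eq_bigr do rewrite mxE big_distrr.
under [RHS]eq_bigr do rewrite mxE big_distrr.
rewrite exchange_big; apply: eq_bigr => i _; apply: eq_bigr => j _ /=.
have -> : A j i = A i j by rewrite -{1}symA mxE.
by ring.
Qed.

End DotProduct.

Section Gradient.
Variables (R : realType) (d : nat).
Implicit Types (f : 'rV[R]_d -> R) (y v : 'rV[R]_d).

Lemma derive_grad f y v : differentiable f y -> 'D_v f y = dotv v (grad f y).
Proof.
move=> df; rewrite deriveE // {1}(row_sum_delta v) linear_sum.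
by apply: eq_bigr => j _; rewrite linearZ /= mxE /partial deriveE.
Qed.

Lemma derive_partial f i y v :
  differentiable (partial i f) y -> 'D_v (partial i f) y = hess_app f y v ord0 i.
Proof.
move=> df; rewrite derive_grad // /dotv mxE.
by apply: eq_bigr => j _; rewrite !mxE mulrC.
Qed.

End Gradient.

Section TwiceDifferentiable.
Variables (R : realType) (d : nat) (U : 'rV[R]_d -> R).
Hypothesis U_C2 : C2 U.
Implicit Types (x y u v D : 'rV[R]_d).

Let U_diff x : differentiable U x := U_C2.1 x.
Let partial_diff i x : differentiable (partial i U) x := U_C2.2.1 i x.
Let hess_cont i j : continuous (partial j (partial i U)) := U_C2.2.2 i j.

Lemma hess_sym y : (hess U y)^T = hess U y.
Proof.
apply/matrixP => i j; rewrite !mxE.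
have dU w x : derivable U x w := diff_derivable (v := w) (U_diff x).
have dpU k w x : derivable (partial k U) x w := diff_derivable (v := w) (partial_diff k x).
exact: (@derive_comm R _ U (ebase R j) (ebase R i) y (dU _) (dU _) (dpU j _) (dpU i _)
  (@hess_cont j i y) (@hess_cont i j y)).
Qed.

Lemma hess_appE y v : hess_app U y v = v *m hess U y.
Proof.
apply/rowP => i; rewrite !mxE; apply: eq_bigr => j _.
by have /matrixP/(_ j i) := hess_sym y; rewrite !mxE mulrC => ->.
Qed.

Lemma continuous_hess_line x D i j : continuous (fun t : R => hess U (x + t *: D) i j).
Proof.
move=> t; under eq_fun do rewrite mxE.
apply: continuous_comp; last exact: hess_cont.
by apply: continuousD; [exact: cst_continuous | exact: scalel_continuous].
Qed.

Lemma is_derive_grad_line x D u (t : R) :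
  is_derive t 1 (fun s => dotv u (grad U (x + s *: D)))
    (dotv u (hess_app U (x + t *: D) D)).
Proof.
rewrite /dotv (_ : (fun s => _) =
  \sum_(i < d) (fun s => u ord0 i * partial i U (x + s *: D))).
  apply: is_derive_sum => i.
  apply/is_derive_cstM/(is_derive_eq (is_derive_line _)); last exact: derive_partial.
  exact: diff_derivable.
by rewrite fct_sumE; apply/funext => s; apply: eq_bigr => i _; rewrite mxE.
Qed.

Definition hess_moment x D (k : nat) : 'M[R]_d :=
  int01mx (fun t => t ^+ k *: hess U (x + t *: D)).

Lemma hess_moment_sym x D k : (hess_moment x D k)^T = hess_moment x D k.
Proof.
rewrite trmx_int01mx; congr int01mx; apply/funext => t.
by rewrite linearZ /= hess_sym.
Qed.

Lemma int01_hess_affine (w : R -> R) (a b : R) x D u v :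
  (forall t, w t = a + b * t) ->
  int01 (fun t => dotv u (hess_app U (x + t *: D) v) * w t) =
  dotv u (v *m (a *: hess_moment x D 0 + b *: hess_moment x D 1)).
Proof.
move=> wE; under eq_int01 do rewrite wE.
have cH := @continuous_hess_line x D.
have cwH : forall i j, continuous (fun t => ((a + b * t) *: hess U (x + t *: D)) i j).
  exact: continuous_scalemx_entry (@continuous_affine R a b) cH.
rewrite /hess_moment (_ : (fun t => t ^+ 0 *: _) = fun t => hess U (x + t *: D)); last first.
  by apply/funext => t; rewrite expr0 scale1r.
rewrite (_ : (fun t => t ^+ 1 *: _) = fun t => t *: hess U (x + t *: D)); last first.
  by apply/funext => t; rewrite expr1.
rewrite -int01mx_affine // -int01v_mulmx // dotv_int01v; last first.
  by move=> i; exact: continuous_mulmx_entry.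
by apply: eq_int01 => t; rewrite hess_appE -scalemxAr dotvZr mulrC.
Qed.

Lemma int01v_hess_app x D v :
  int01v (fun t => hess_app U (x + t *: D) v) = v *m hess_moment x D 0.
Proof.
rewrite (_ : (fun t => _) = fun t => v *m hess U (x + t *: D)); last first.
  by apply/funext => t; rewrite hess_appE.
rewrite int01v_mulmx; last exact: continuous_hess_line.
by congr (_ *m int01mx _); apply/funext => t; rewrite expr0 scale1r.
Qed.

Lemma grad_integral_remainder x D :
  grad U (x + D) = grad U x + D *m hess_moment x D 0.
Proof.
rewrite -int01v_hess_app; apply/rowP => i; rewrite !mxE.
have cH : continuous (fun t : R => hess_app U (x + t *: D) D ord0 i).
  by under eq_fun do rewrite hess_appE; exact/continuous_mulmx_entry/continuous_hess_line.
have dF (t : R) : is_derive t 1 (fun s => partial i U (x + s *: D))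
                              (hess_app U (x + t *: D) D ord0 i).
  apply: (is_derive_eq (is_derive_line _)); last exact: derive_partial.
  exact: diff_derivable.
by rewrite (int01_FTC cH dF) scale1r scale0r addr0 addrC subrK.
Qed.

Lemma taylor_integral_remainder x D : U (x + D) =
  U x + dotv D (grad U x) + dotv D (D *m (hess_moment x D 0 - hess_moment x D 1)).
Proof.
have := @int01_hess_affine (fun t => 1 + -1 * t) 1 (-1) x D D D (fun => erefl).
rewrite scale1r scaleN1r => <-.
pose G t := dotv D (grad U (x + t *: D)).
pose F t := U (x + t *: D) + (1 + -1 * t) * G t.
have cf : continuous (fun t : R => dotv D (hess_app U (x + t *: D) D) * (1 + -1 * t)).
  apply: continuous_mul (@continuous_affine R 1 (-1)).
  by under eq_fun do rewrite hess_appE; exact/continuous_dotv_mulmx/continuous_hess_line.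
have dF (t : R) : is_derive t 1 F (dotv D (hess_app U (x + t *: D) D) * (1 + -1 * t)).
  have dU := is_derive_line (diff_derivable (v := D) (U_diff (x + t *: D))).
  have := is_derive_add dU
    (is_derive_mul (is_derive_affine 1 (-1) t) (is_derive_grad_line x D D t)).
  by rewrite derive_grad // -/(G t) => dF; apply: (is_derive_eq dF); ring.
rewrite (int01_FTC cf dF) /F /G !scale0r !addr0 scale1r.
by ring.
Qed.

End TwiceDifferentiable.

Section Leapfrog.
Variables (R : realType) (d : nat).
Implicit Types (U : 'rV[R]_d -> R) (q p g D : 'rV[R]_d) (h : R).

Lemma leapfrog_position U h q p :
  (leapfrog U h (q, p)).1 = q + h *: p - (h ^+ 2 / 2) *: grad U q.
Proof. by rewrite /= scalerBr scalerA addrA mulrA -expr2. Qed.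

Lemma leapfrog_momentum U h q p : (leapfrog U h (q, p)).2 =
  p - (h / 2) *: grad U q - (h / 2) *: grad U (leapfrog U h (q, p)).1.
Proof. by rewrite /leapfrog /Psi1 /Psi2 /=. Qed.

Lemma leapfrog_energy_identity (A0 A1 : 'M[R]_d) p g h D :
  A0^T = A0 -> A1^T = A1 -> D = h *: p - (h ^+ 2 / 2) *: g ->
  dotv D g + dotv D (D *m (A0 - A1))
  + sqnorm (p - (h / 2) *: g - (h / 2) *: (g + D *m A0)) / 2 - sqnorm p / 2 =
    h ^+ 2 * dotv p (p *m (1 / 2 *: A0 + -1 *: A1))
  + h ^+ 3 * dotv p (g *m (- (1 / 4) *: A0 + 1 *: A1))
  - h ^+ 4 / 4 * dotv g (g *m (0 *: A0 + 1 *: A1))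
  + h ^+ 4 / 8 * sqnorm (p *m A0)
  - h ^+ 5 / 8 * dotv (g *m A0) (p *m A0)
  + h ^+ 6 / 32 * sqnorm (g *m A0).
Proof.
move=> sA0 sA1 ->; rewrite /sqnorm.
rewrite !(mulmxDl, mulmxDr, mulNmx, mulmxN) -!scalemxAl -!scalemxAr.
rewrite !(dotvDl, dotvDr, dotvNl, dotvNr, dotvZl, dotvZr).
rewrite (dotvC (p *m A0) p) (dotvC (g *m A0) p) (dotvC (p *m A0) g) (dotvC (g *m A0) g).
rewrite (dotvC g p) (dotvC (g *m A0) (p *m A0)).
rewrite (dotv_mulmx_sym g p sA0) (dotv_mulmx_sym g p sA1).
by field.
Qed.

End Leapfrog.

Theorem lemma15 (R : realType) (d : nat) (U : 'rV[R]_d -> R) :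
  C2 U ->
  forall (q0 p0 : 'rV[R]_d) (h : R), 0 < h ->
  let q1 := (leapfrog U h (q0, p0)).1 in
  let qt := fun t : R => q0 + t *: (q1 - q0) in
  let g0 := grad U q0 in
  Ham U (leapfrog U h (q0, p0)) - Ham U (q0, p0) =
    h ^+ 2 * int01 (fun t => dotv p0 (hess_app U (qt t) p0) * (1 / 2 - t))
  + h ^+ 3 * int01 (fun t => dotv p0 (hess_app U (qt t) g0) * (t - 1 / 4))
  - h ^+ 4 / 4 * int01 (fun t => dotv g0 (hess_app U (qt t) g0) * t)
  + h ^+ 4 / 8 * sqnorm (int01v (fun t => hess_app U (qt t) p0))
  - h ^+ 5 / 8 * dotv (int01v (fun t => hess_app U (qt t) g0))
                      (int01v (fun t => hess_app U (qt t) p0))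
  + h ^+ 6 / 32 * sqnorm (int01v (fun t => hess_app U (qt t) g0)).
Proof.
(* The identity holds for every step size h. *)
move=> hU q0 p0 h _ q1 qt g0.
have DE : q1 - q0 = h *: p0 - (h ^+ 2 / 2) *: g0.
  by rewrite /q1 leapfrog_position addrAC [q0 + _]addrC addrK.
rewrite /qt; set D := q1 - q0 in DE *.
have q1E : q1 = q0 + D by rewrite addrC subrK.
rewrite (int01_hess_affine hU (a := 1 / 2) (b := -1)); last by move=> t; ring.
rewrite (int01_hess_affine hU (a := - (1 / 4)) (b := 1)); last by move=> t; ring.
rewrite (int01_hess_affine hU (a := 0) (b := 1)); last by move=> t; ring.
rewrite !(int01v_hess_app hU) /Ham leapfrog_momentum -/q1 q1E.
rewrite (taylor_integral_remainder hU) (grad_integral_remainder hU) -/g0.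
have sym := hess_moment_sym hU q0 D.
rewrite -(leapfrog_energy_identity (sym 0) (sym 1) DE) /=.
by ring.
Qed.
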